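(* Let $\gamma\in\{\tfrac12,1,\dots\}$, $\varepsilon\in\{0,\tfrac12\}$ and $j\in\tfrac12\mathbb Z$ with $j-\varepsilon\notin\mathbb Z$. Then on each $J_0$-eigenspace $V_M$ ($M\in\varepsilon+\gamma+\mathbb Z$, spanned by $|\gamma,\mu\rangle\otimes|j,M-\mu\rangle$, $\mu\in\{-\gamma,\dots,\gamma\}$) the Casimir $Q$ has eigenvalues $-(j+\mu)(j+\mu+1)$, $\mu\in\{-\gamma,\dots,\gamma\}$ (counted with algebraic multiplicity), and $Q$ is diagonalisable on $F_\gamma\otimes C^\varepsilon_j$ if and only if $j>\gamma-1$ or $j<-\gamma$.
   Context: Let $\mathfrak{spin}(2,1)_{\mathbb C}$ have basis $J_0,J_+,J_-$ with $[J_0,J_\pm]=\pm J_\pm$, $[J_+,J_-]=-2J_0$, and Casimir $Q=-J_0(J_0-1)+J_+J_-$. Set $\Gamma_\pm(j,m)=\mathrm i\sqrt{j\mp m}\,\sqrt{j\pm m+1}$. A module with basis $\{|j,m\rangle\}$ has action $J_0|j,m\rangle=m|j,m\rangle$, $J_\pm|j,m\rangle=\Gamma_\pm(j,m)|j,m\pm1\rangle$. The continuous series module $C^\varepsilon_j$ has basis $|j,m\rangle$, $m\in\varepsilon+\mathbb Z$. The finite-dimensional module $F_\gamma$ has basis $|\gamma,\mu\rangle$, $\mu\in\{-\gamma,\dots,\gamma\}$. On a tensor product the generators act as $J_0\otimes1+1\otimes J_0$, $J_\pm\otimes1+1\otimes J_\pm$. *)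

From HB Require Import structures.
From mathcomp Require Import all_boot all_order all_algebra all_field.
Set Implicit Arguments. Unset Strict Implicit. Unset Printing Implicit Defensive.
Import Order.TTheory GRing.Theory Num.Theory.
Local Open Scope ring_scope.

Definition Gp (j m : algC) : algC := 'i * sqrtC (j - m) * sqrtC (j + m + 1).
Definition Gm (j m : algC) : algC := 'i * sqrtC (j + m) * sqrtC (j - m + 1).

(* gamma = g/2 ; the k-th weight of F_gamma is mu_k = -gamma + k, k = 0..g *)
Definition gam (g : nat) : algC := g%:R / 2.
Definition mu (g k : nat) : algC := k%:R - gam g.

(* Basis of V_M (J0-eigenspace of F_gamma (x) C_j^eps with eigenvalue M):
     e_k = |gamma, mu_k> (x) |j, M - mu_k>,  k : 'I_(g+1).
   Matrices act on column coordinate vectors: A i k = coefficient of e_i in A e_k.  J_+ maps V_M to V_(M+1):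
     J_+ e_k = Gamma_+(gamma,mu_k) e'_(k+1) + Gamma_+(j,M-mu_k) e'_k
   (the first term vanishes when k = g since Gamma_+(gamma,gamma)=0).
   J_- maps V_M to V_(M-1):
     J_- e_k = Gamma_-(gamma,mu_k) e'_(k-1) + Gamma_-(j,M-mu_k) e'_k
   (the first term vanishes when k = 0 since Gamma_-(gamma,-gamma)=0). *)
Definition Jp_blk (g : nat) (j M : algC) : 'M[algC]_(g.+1) :=
  \matrix_(i, k) ((i == k.+1 :> nat)%:R * Gp (gam g) (mu g k)
                  + (i == k :> nat)%:R * Gp j (M - mu g k)).
Definition Jm_blk (g : nat) (j M : algC) : 'M[algC]_(g.+1) :=
  \matrix_(i, k) ((i.+1 == k :> nat)%:R * Gm (gam g) (mu g k)
                  + (i == k :> nat)%:R * Gm j (M - mu g k)).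
Definition J0_blk (g : nat) (M : algC) : 'M[algC]_(g.+1) := M%:M.

Definition Q_blk (g : nat) (j M : algC) : 'M[algC]_(g.+1) :=
  - (J0_blk g M *m (J0_blk g M - 1%:M)) + Jp_blk g j (M - 1) *m Jm_blk g j M.

(* Q is diagonalisable on F_gamma (x) C_j^eps = (+)_M V_M  iff it is on every
   (Q-invariant, finite-dimensional) V_M, M in eps + gamma + Z. *)
Definition Q_diagonalisable (g : nat) (eps j : algC) : Prop :=
  forall M : algC, (M - eps - gam g) \is a Num.int ->
    diagonalizable (Q_blk g j M).

From HB Require Import structures.
From mathcomp Require Import all_boot all_order all_algebra all_field.
From mathcomp Require Import ring zify.
Import Order.TTheory GRing.Theory Num.Theory.
Set Implicit Arguments. Unset Strict Implicit. Unset Printing Implicit Defensive.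
Local Open Scope ring_scope.

(* In the basis |gamma, mu_k> (x) |j, M - mu_k> of V_M, J_- is upper and J_+
   lower bidiagonal.  A diagonal rescaling removes the square roots from their
   entries, and conjugating by the binomial matrix ('C(k, i))_(i, k)
   diagonalises the rescaled J_-, while the rescaled J_+ stays lower
   bidiagonal.  Hence Q is similar to a lower bidiagonal matrix whose diagonal
   gives the eigenvalues -(j + mu)(j + mu + 1) and whose subdiagonal entries
   are nonzero because j - eps is not an integer.  Every eigenspace is then a
   line, so Q is diagonalisable iff these eigenvalues are distinct.  Since
   x |-> -x(x + 1) is symmetric about -1/2, two weights mu <> mu' give the same
   eigenvalue iff mu + mu' = -2j - 1, which happens exactly when
   -gamma <= j <= gamma - 1. *)

Lemma sum_indicator (R : pzSemiRingType) n c (F : nat -> R) :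
  \sum_(l < n) ((l : nat) == c)%:R * F l = if (c < n)%N then F c else 0.
Proof.
transitivity (\sum_(l < n | (l : nat) == c) F l); last exact: big_ord1_eq.
by rewrite [RHS]big_mkcond; apply: eq_bigr => l _; case: eqP; rewrite ?mul1r ?mul0r.
Qed.

Lemma natr_binS (R : numFieldType) (i k : nat) :
  'C(k, i.+1)%:R = (k%:R - i%:R) * 'C(k, i)%:R / i.+1%:R :> R.
Proof.
apply: (canRL (mulfK _)); first by rewrite pnatr_eq0.
have [ik | ki] := leqP i k; last by rewrite !bin_small ?mulr0 ?mul0r // ltnW.
by rewrite -natrB // -!natrM mulnC mul_bin_left.
Qed.

Lemma addr_notint_neq0 (R : archiNumDomainType) (x y : R) :
  x \isn't a Num.int -> y \is a Num.int -> x + y != 0.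
Proof. by move=> xZ yZ; apply: contra xZ; rewrite addr_eq0 => /eqP ->; rewrite rpredN. Qed.

Section SimilarMatrices.
Variables (F : fieldType) (n : nat) (P A B : 'M[F]_n).
Hypotheses (P_unit : P \in unitmx) (PA_BP : P *m A = B *m P).

Lemma char_poly_similar : char_poly A = char_poly B.
Proof.
pose Px := map_mx polyC P.
have PxA : Px *m char_poly_mx A = char_poly_mx B *m Px.
  by rewrite /char_poly_mx mulmxBr mulmxBl -scalar_mxC -map_mxM PA_BP map_mxM.
have : \det Px * char_poly A = char_poly B * \det Px.
  by rewrite /char_poly -!det_mulmx PxA.
rewrite det_map_mx [_ * char_poly A]mulrC => /mulIf; apply.
by rewrite polyC_eq0 -unitfE -unitmxE.
Qed.

Lemma similar_sub_scalar r : P *m (A - r%:M) = (B - r%:M) *m P.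
Proof. by rewrite mulmxBr mulmxBl PA_BP scalar_mxC. Qed.

Lemma mxrank_similar : \rank A = \rank B.
Proof.
rewrite -(mxrankMfree B (_ : row_free P)) ?row_free_unit // -PA_BP.
by rewrite (eqmxMfull A) ?row_full_unit.
Qed.

End SimilarMatrices.

(* Deleting the first row and the last column leaves a triangular minor whose
   diagonal is the subdiagonal of A. *)
Lemma unreduced_hessenberg_rank (F : fieldType) n (A : 'M[F]_n.+1) (r : F) :
  (forall i k : 'I_n.+1, (k.+1 < i)%N -> A i k = 0) ->
  (forall k : 'I_n, A (lift ord0 k) (widen_ord (leqnSn n) k) != 0) ->
  (n <= \rank (A - r%:M)%R)%N.
Proof.
move=> A_hess A_sub; set A' := A - r%:M.
pose up : 'I_n -> 'I_n.+1 := lift ord0.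
pose wide : 'I_n -> 'I_n.+1 := widen_ord (leqnSn n).
have up_wide i k : (up i == wide k) = (i.+1 == k) by rewrite -val_eqE /= /bump add1n.
pose B := rowsub up (colsub wide A').
have rkB : \rank B = n.
  apply: mxrank_unit; rewrite unitmxE -det_tr det_trig.
    rewrite unitfE; apply/prodf_neq0 => i _.
    by rewrite !mxE up_wide gtn_eqF // mulr0n subr0.
  apply/is_trig_mxP => i k ik.
  by rewrite !mxE up_wide gtn_eqF ?leqW // mulr0n subr0 A_hess //= /bump add1n.
rewrite -[X in (X <= _)%N]rkB /B rowsubE.
have -> : colsub wide A' = A' *m colsub wide 1%:M by rewrite mulmx_colsub mulmx1.
exact: leq_trans (mxrankM_maxr _ _) (mxrankM_maxl _ _).
Qed.

Lemma mxrank_sum_eigenspace_le (F : fieldType) n (A : 'M[F]_n) (rs : seq F) :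
  (\rank (\sum_(r <- rs) eigenspace A r)%MS
     <= \sum_(r <- rs) \rank (eigenspace A r))%N.
Proof. exact: (mxrank_sum_leqif _).1. Qed.

Lemma nonderogatory_diagonalizableP (F : fieldType) n (A : 'M[F]_n.+1)
    (lam : 'I_n.+1 -> F) :
  (forall r, (n <= \rank (A - r%:M)%R)%N) ->
  char_poly A = \prod_k ('X - (lam k)%:P) ->
  diagonalizable A <-> injective lam.
Proof.
move=> rkA charA; set s := [seq lam k | k <- enum 'I_n.+1].
have charAs : char_poly A = \prod_(x <- s) ('X - x%:P) by rewrite big_map big_enum.
split=> [/diagonalizablePeigen [rs urs sum_rs] | inj_lam]; last first.
  apply/diagonalizableP; exists s; last by rewrite -charAs mxminpoly_dvd_char.
  by rewrite map_inj_uniq ?enum_uniq.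
have rk_eig r : (\rank (eigenspace A r) <= (r \in s))%N.
  have [ev | nev] := boolP (eigenvalue A r).
    rewrite -root_prod_XsubC -charAs -eigenvalue_root_char ev mxrank_ker.
    by have := rkA r; lia.
  by move: nev; rewrite /eigenvalue negbK => /eqP ->; rewrite mxrank0.
have rk_sum : (n.+1 <= count (mem s) rs)%N.
  rewrite -[X in (X <= _)%N](mxrank1 F) -sum_rs -sum1_count.
  apply: leq_trans (mxrank_sum_eigenspace_le A rs) _.
  rewrite [X in (_ <= X)%N]big_mkcond /=; apply: leq_sum => r _.
  by have := rk_eig r; case: (r \in s).
apply/injectiveP/(leq_size_uniq (undup_uniq s)) => [x|]; first by rewrite mem_undup.
rewrite size_map size_enum_ord; apply: leq_trans rk_sum _.
rewrite -size_filter uniq_leq_size ?filter_uniq // => x.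
by rewrite mem_filter mem_undup => /andP[].
Qed.

Lemma mu_add_gam g k : mu g k + gam g = k%:R.
Proof. by rewrite /mu subrK. Qed.

Lemma mu_rev g k : (k <= g)%N -> mu g (g - k) = - mu g k.
Proof. by move=> kg; rewrite /mu /gam natrB //; field. Qed.

Lemma Gm_eq0 j m : (Gm j m == 0) = (j + m == 0) || (j - m + 1 == 0).
Proof. by rewrite /Gm !mulf_eq0 (negbTE (neq0Ci _)) !sqrtC_eq0. Qed.

Lemma Gm_mul_Gp j m : Gm j m * Gp j (m - 1) = - ((j + m) * (j - m + 1)).
Proof.
rewrite /Gm /Gp.
have -> : j - (m - 1) = j - m + 1 by ring.
have -> : j + (m - 1) + 1 = j + m by ring.
transitivity ('i ^+ 2 * sqrtC (j + m) ^+ 2 * sqrtC (j - m + 1) ^+ 2); first ring.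
by rewrite sqrCi !sqrtCK; ring.
Qed.

Lemma Gm_mul_Gp_weight g k :
  Gm (gam g) (mu g k.+1) * Gp (gam g) (mu g k) = - (k.+1%:R * (g%:R - k%:R)).
Proof.
rewrite (_ : mu g k = mu g k.+1 - 1) ?Gm_mul_Gp; last by rewrite /mu -natr1; ring.
rewrite [gam g + _]addrC mu_add_gam; congr (- (_ * _)).
by rewrite /mu /gam -natr1; field.
Qed.

Lemma Gm_gam_neq0 g k : (k < g)%N -> Gm (gam g) (mu g k.+1) != 0.
Proof.
move=> kg; rewrite Gm_eq0 negb_or addrC mu_add_gam pnatr_eq0 /=.
have -> : gam g - mu g k.+1 + 1 = (g - k)%:R.
  by rewrite natrB 1?ltnW // /mu /gam -natr1; field.
by rewrite pnatr_eq0 subn_eq0 -ltnNge.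
Qed.

Lemma Gm_neq0 eps j m : eps *+ 2 \is a Num.int -> m - eps \is a Num.int ->
  j - eps \isn't a Num.int -> Gm j m != 0.
Proof.
move=> eps2Z mZ jZ; rewrite Gm_eq0 negb_or.
have -> : j + m = (j - eps) + (m - eps + eps *+ 2) by rewrite mulr2n; ring.
have -> : j - m + 1 = (j - eps) + (1 - (m - eps)) by ring.
have Z1 : 1 - (m - eps) \is a Num.int by rewrite rpredB ?rpred1.
by rewrite !addr_notint_neq0 //; exact: rpredD.
Qed.

Definition Casimir_eigenvalue g j k := - ((j + mu g k) * (j + mu g k + 1)).

Lemma Casimir_eigenvalue_sub g j (a b : nat) :
  Casimir_eigenvalue g j b - Casimir_eigenvalue g j a
  = (a%:R - b%:R) * (j *+ 2 + a%:R + b%:R - g%:R + 1).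
Proof. by rewrite /Casimir_eigenvalue /mu /gam mulr2n; field. Qed.

Lemma injective_Casimir_eigenvalue g j : j *+ 2 \is a Num.int ->
  injective (fun k : 'I_g.+1 => Casimir_eigenvalue g j k)
  <-> gam g - 1 < j \/ j < - gam g.
Proof.
move=> /intrP[J2 J2E].
have ltE (x y : algC) : (x < y) = (x *+ 2 < y *+ 2) by rewrite ltr_pMn2r.
have lt1 : (gam g - 1 < j) = (g%:Z - 2 < J2)%R.
  rewrite ltE J2E -(ltr_int algC) intrB -pmulrn; congr (_ < _).
  by rewrite /gam mulr2n; field.
have lt2 : (j < - gam g) = (J2 < - g%:Z)%R.
  rewrite ltE J2E -(ltr_int algC) intrN -pmulrn; congr (_ < _).
  by rewrite /gam mulr2n; field.
have eigE (a b : 'I_g.+1) :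
    (Casimir_eigenvalue g j a == Casimir_eigenvalue g j b)
    = (a == b) || (J2 + a%:Z + b%:Z - g%:Z + 1 == 0)%R.
  rewrite eq_sym -subr_eq0 Casimir_eigenvalue_sub mulf_eq0 subr_eq0 eqr_nat.
  by rewrite J2E -(intr_eq0 algC) !(intrD, intrB, intrN) -!pmulrn.
rewrite lt1 lt2; split=> [inj | J2_out a b /eqP].
  have [J2_big | J2_le] := ltrP (g%:Z - 2) J2; first by left.
  have [J2_small | J2_ge] := ltrP J2 (- g%:Z); first by right.
  (* weights a < b <= g with a + b = g - 1 - 2j *)
  have [t tE] : exists t : nat, t%:Z = (g%:Z - 1 - J2)%R.
    by exists (absz (g%:Z - 1 - J2)%R); lia.
  pose b := minn t g; pose a := (t - b)%N.
  have [ag bg ab] : [/\ (a < g.+1)%N, (b < g.+1)%N & (a < b)%N].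
    by split; rewrite /a /b; lia.
  have /eqP[] : Ordinal ag != Ordinal bg by rewrite -val_eqE /= ltn_eqF.
  apply: inj; apply/eqP; rewrite (eigE (Ordinal ag)) /=.
  by apply/orP; right; apply/eqP; rewrite /a /b; lia.
rewrite eigE => /orP[/eqP // | /eqP abE]; apply: ord_inj.
by have := ltn_ord a; have := ltn_ord b; case: J2_out; lia.
Qed.

Section CasimirBlock.
Variables (g : nat) (j M : algC).

Definition Jm_eigval k := j + (M - mu g k).
Definition Jm_diag k := Gm j (M - mu g k).

Hypothesis Jm_diag_neq0 : forall k, (k <= g)%N -> Jm_diag k != 0.

Let entry_simp :=
  (mulr0n, mulr1n, mul0r, mul1r, mulr0, addr0, add0r, subr0, sub0r, oppr0).

Lemma Jm_eigval_neq0 k : (k <= g)%N -> Jm_eigval k != 0.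
Proof.
move=> kg; apply: contraNneq (Jm_diag_neq0 kg).
by rewrite /Jm_diag Gm_eq0 -/(Jm_eigval k) => ->; rewrite eqxx.
Qed.

Lemma Q_blkE :
  Q_blk g j M = - (M * (M - 1))%:M + Jp_blk g j (M - 1) *m Jm_blk g j M.
Proof. by rewrite /Q_blk /J0_blk -(raddfB (@scalar_mx _ _)) -scalar_mxM. Qed.

(* Chosen so that [rescale_mx'] J_- [rescale_mx]^-1 and
   [rescale_mx] J_+ [rescale_mx']^-1 have the square-root-free entries of
   [Jm_resc] and [Jp_resc]. *)
Definition rescale_step k :=
  - Jm_eigval k * Gm (gam g) (mu g k.+1) / (Jm_diag k * k.+1%:R).
Fixpoint rescale k := if k is k'.+1 then rescale k' * rescale_step k' else 1.
Definition rescale' k := Jm_eigval k * rescale k / Jm_diag k.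

Definition rescale_mx : 'M[algC]_g.+1 := diag_mx (\row_k rescale k).
Definition rescale_mx' : 'M[algC]_g.+1 := diag_mx (\row_k rescale' k).

Definition Jm_resc : 'M[algC]_g.+1 :=
  \matrix_(i, k) ((i == k :> nat)%:R * Jm_eigval k - (i.+1 == k :> nat)%:R * k%:R).
Definition Jp_resc : 'M[algC]_g.+1 :=
  \matrix_(i, k) ((i == k :> nat)%:R * (M - 1 - mu g k - j)
                  + (i == k.+1 :> nat)%:R * (g%:R - k%:R)).

Lemma rescale_Jm : rescale_mx' *m Jm_blk g j M = Jm_resc *m rescale_mx.
Proof.
apply/matrixP => i k; rewrite mul_diag_mx mul_mx_diag !mxE.
have [<- | ik] := eqVneq (i : nat) k.
  rewrite (gtn_eqF (ltnSn i)) /= !entry_simp -/(Jm_diag i) /rescale'.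
  by field; rewrite Jm_diag_neq0 // -ltnS.
have [<- | iSk] := eqVneq i.+1 k; last by rewrite /= !entry_simp.
rewrite /= !entry_simp -/(Jm_diag i) /rescale' /rescale_step.
by field; rewrite nat1r pnatr_eq0 Jm_diag_neq0 // -ltnS.
Qed.

Lemma rescale_Jp : rescale_mx *m Jp_blk g j (M - 1) = Jp_resc *m rescale_mx'.
Proof.
apply/matrixP => i k; rewrite mul_diag_mx mul_mx_diag !mxE.
have [<- | ik] := eqVneq (i : nat) k.
  have Ji : Jm_diag i != 0 by rewrite Jm_diag_neq0 // -ltnS.
  have JmJp : Jm_diag i * Gp j (M - 1 - mu g i)
              = - (Jm_eigval i * (j - (M - mu g i) + 1)).
    have -> : M - 1 - mu g i = M - mu g i - 1 by ring.
    by rewrite /Jm_diag Gm_mul_Gp.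
  rewrite (ltn_eqF (ltnSn i)) /= !entry_simp /rescale' -[Gp _ _](mulKf Ji) JmJp.
  by field.
have [iE | iSk] := eqVneq (i : nat) k.+1; last by rewrite /= !entry_simp.
have Jk : Jm_diag k != 0 by rewrite Jm_diag_neq0 // -ltnS.
rewrite /= !entry_simp iE /= /rescale' /rescale_step.
transitivity (- Jm_eigval k * (Gm (gam g) (mu g k.+1) * Gp (gam g) (mu g k))
              * rescale k / (Jm_diag k * k.+1%:R)).
  by field; rewrite nat1r pnatr_eq0 Jk.
by rewrite Gm_mul_Gp_weight; field; rewrite nat1r pnatr_eq0 Jk.
Qed.

Lemma rescale_neq0 k : (k <= g)%N -> rescale k != 0.
Proof.
elim: k => [|k IHk] kg /=; first exact: oner_neq0.
apply: mulf_neq0; first by rewrite IHk // ltnW.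
apply: mulf_neq0.
  by rewrite mulf_neq0 ?oppr_eq0 ?Jm_eigval_neq0 ?Gm_gam_neq0 // ltnW.
by rewrite invr_eq0 mulf_neq0 ?pnatr_eq0 ?Jm_diag_neq0 // ltnW.
Qed.

Lemma rescale_mx_unit : rescale_mx \in unitmx.
Proof.
rewrite unitmxE det_diag unitfE; apply/prodf_neq0 => k _.
by rewrite mxE rescale_neq0 // -ltnS.
Qed.

Definition binomial_mx : 'M[algC]_g.+1 := \matrix_(i, k) 'C(k, i)%:R.
Definition Jm_eigval_mx : 'M[algC]_g.+1 := diag_mx (\row_k Jm_eigval k).
Definition Jp_bidiag : 'M[algC]_g.+1 :=
  \matrix_(i, k) ((i == k :> nat)%:R * (M - 1 - j - gam g + k%:R)
                  + (i == k.+1 :> nat)%:R * (g%:R - k%:R)).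

Lemma binomial_mx_unit : binomial_mx \in unitmx.
Proof.
rewrite unitmxE -det_tr det_trig.
  by rewrite (eq_bigr (fun _ => 1)) ?big1_eq ?unitr1 // => i _; rewrite !mxE binn.
by apply/is_trig_mxP => i k ik; rewrite !mxE bin_small.
Qed.

Lemma Jm_resc_binomial : Jm_resc *m binomial_mx = binomial_mx *m Jm_eigval_mx.
Proof.
apply/matrixP => i k; rewrite mul_mx_diag !mxE.
under eq_bigr => l _ do
  rewrite !mxE mulrBl [(i == l :> nat)]eq_sym [(i.+1 == l :> nat)]eq_sym -!mulrA.
rewrite sumrB (sum_indicator _ _ (fun l => Jm_eigval l * 'C(k, l)%:R)).
rewrite (sum_indicator _ _ (fun l => l%:R * 'C(k, l)%:R)) ltn_ord.
rewrite (_ : (if _ then _ else _) = i.+1%:R * 'C(k, i.+1)%:R); last first.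
  by case: ltnP => // gi; rewrite bin_small ?mulr0 // (leq_trans (ltn_ord k)).
by rewrite natr_binS /Jm_eigval /mu; field; rewrite nat1r pnatr_eq0.
Qed.

Lemma Jp_resc_binomial : Jp_resc *m binomial_mx = binomial_mx *m Jp_bidiag.
Proof.
apply/matrixP => i k; rewrite !mxE.
under eq_bigr => l _ do rewrite !mxE mulrDl [(i == l :> nat)]eq_sym -!mulrA.
under [RHS]eq_bigr => l _ do rewrite !mxE mulrDr !(mulrCA 'C(l, i)%:R).
rewrite !big_split /=.
rewrite (sum_indicator _ _ (fun l => (M - 1 - mu g l - j) * 'C(k, l)%:R)).
rewrite (sum_indicator _ _ (fun l => 'C(l, i)%:R * (M - 1 - j - gam g + k%:R))).
rewrite (sum_indicator _ _ (fun l => 'C(l, i)%:R * (g%:R - k%:R))) !ltn_ord.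
rewrite (_ : (if _ then _ else _) = 'C(k.+1, i)%:R * (g%:R - k%:R)); last first.
  case: ltnP => // gk; rewrite (_ : k = g :> nat) ?subrr ?mulr0 //.
  by have := ltn_ord k; lia.
case: i => -[|i] /= ilt.
  rewrite big1 => [|l _]; last by rewrite mul0r.
  by rewrite !bin0 /mu /gam; field.
under eq_bigr => l _ do rewrite eqSS eq_sym.
rewrite (sum_indicator _ _ (fun l => (g%:R - l%:R) * 'C(k, l)%:R)) ltnW //.
by rewrite binS natrD !natr_binS /mu /gam; field; rewrite nat1r pnatr_eq0.
Qed.

Definition Q_trig : 'M[algC]_g.+1 :=
  - (M * (M - 1))%:M + Jp_bidiag *m Jm_eigval_mx.
Definition Q_conjugator : 'M[algC]_g.+1 := invmx binomial_mx *m rescale_mx.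

Lemma Q_conjugator_unit : Q_conjugator \in unitmx.
Proof. by rewrite unitmx_mul unitmx_inv binomial_mx_unit rescale_mx_unit. Qed.

Lemma Q_blk_similar : Q_conjugator *m Q_blk g j M = Q_trig *m Q_conjugator.
Proof.
have B_unit := binomial_mx_unit.
set B := binomial_mx; set T := Jp_resc *m Jm_resc.
have DQ : rescale_mx *m (Jp_blk g j (M - 1) *m Jm_blk g j M) = T *m rescale_mx.
  by rewrite mulmxA rescale_Jp -!mulmxA rescale_Jm.
have TB : T *m B = B *m (Jp_bidiag *m Jm_eigval_mx).
  by rewrite -mulmxA Jm_resc_binomial mulmxA Jp_resc_binomial -mulmxA.
have BT : invmx B *m T = (Jp_bidiag *m Jm_eigval_mx) *m invmx B.
  by rewrite -[LHS](mulmxK B_unit) -(mulmxA _ T) TB mulmxA mulVmx // mul1mx.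
rewrite Q_blkE /Q_trig /Q_conjugator mulmxDr mulmxDl mulmxN mulNmx scalar_mxC.
by congr (_ + _); rewrite -[LHS]mulmxA DQ mulmxA BT -mulmxA.
Qed.

Lemma Q_trigE i k : Q_trig i k = - (M * (M - 1)) *+ (i == k :> nat)
  + ((i == k :> nat)%:R * (M - 1 - j - gam g + k%:R)
     + (i == k.+1 :> nat)%:R * (g%:R - k%:R)) * Jm_eigval k.
Proof. by rewrite /Q_trig mul_mx_diag !mxE mulNrn. Qed.

Lemma Q_trig_is_trig : is_trig_mx Q_trig.
Proof.
apply/is_trig_mxP => i k ik.
by rewrite Q_trigE (ltn_eqF ik) (@ltn_eqF i k.+1) 1?ltnW //= !entry_simp.
Qed.

Lemma Q_trig_diag k : Q_trig k k = - ((j - mu g k) * (j - mu g k + 1)).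
Proof.
by rewrite Q_trigE eqxx (ltn_eqF (ltnSn _)) /= !entry_simp /Jm_eigval /mu; ring.
Qed.

Lemma Q_trig_subdiag (i k : 'I_g.+1) : i = k.+1 :> nat ->
  Q_trig i k = (g%:R - k%:R) * Jm_eigval k.
Proof. by move=> ik; rewrite Q_trigE ik (gtn_eqF (ltnSn _)) eqxx /= !entry_simp. Qed.

Lemma Q_trig_hessenberg (i k : 'I_g.+1) : (k.+1 < i)%N -> Q_trig i k = 0.
Proof. by move=> ki; rewrite Q_trigE !gtn_eqF // 1?ltnW //= !entry_simp. Qed.

Lemma char_poly_Q_blk :
  char_poly (Q_blk g j M) = \prod_(k < g.+1) ('X - (Casimir_eigenvalue g j k)%:P).
Proof.
rewrite (char_poly_similar Q_conjugator_unit Q_blk_similar).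
rewrite char_poly_trig ?Q_trig_is_trig // (reindex_inj rev_ord_inj) /=.
apply: eq_bigr => k _.
rewrite Q_trig_diag /= subSS mu_rev /Casimir_eigenvalue; last by rewrite -ltnS.
by congr ('X - (- _)%:P); ring.
Qed.

Lemma rank_Q_blk_sub r : (g <= \rank (Q_blk g j M - r%:M)%R)%N.
Proof.
rewrite (mxrank_similar Q_conjugator_unit (similar_sub_scalar Q_blk_similar r)).
apply: unreduced_hessenberg_rank => [i k|k]; first exact: Q_trig_hessenberg.
rewrite Q_trig_subdiag; last by rewrite /= /bump add1n.
have kg : (k < g)%N := ltn_ord k.
by rewrite mulf_neq0 ?Jm_eigval_neq0 ?subr_eq0 ?eqr_nat //= ?(gtn_eqF kg) ?(ltnW kg).
Qed.

End CasimirBlock.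

Theorem mainTheorem8 (g : nat) (eps j : algC) :
  (1 <= g)%N ->
  (eps = 0 \/ eps = 1 / 2) ->
  (j *+ 2) \is a Num.int ->
  (j - eps) \isn't a Num.int ->
  (forall M : algC, (M - eps - gam g) \is a Num.int ->
     char_poly (Q_blk g j M) =
       \prod_(k < g.+1) ('X - (- ((j + mu g k) * (j + mu g k + 1)))%:P))
  /\
  (Q_diagonalisable g eps j <-> (gam g - 1 < j \/ j < - gam g)).
Proof.
move=> _ eps_half j2Z jZ.
have eps2Z : eps *+ 2 \is a Num.int.
  by case: eps_half => ->; rewrite ?mul0rn ?rpred0 // mulr2n -splitr rpred1.
have Jm_neq0 M : M - eps - gam g \is a Num.int ->
    forall k, (k <= g)%N -> Jm_diag g j M k != 0.
  move=> MZ k _; apply: Gm_neq0 eps2Z _ jZ.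
  have -> : M - mu g k - eps = (M - eps - gam g) + (g%:R - k%:R).
    by rewrite /mu /gam; field.
  by apply: rpredD MZ _; apply: rpredB; apply: natr_int.
have charQ M (MZ : M - eps - gam g \is a Num.int) := char_poly_Q_blk (Jm_neq0 M MZ).
have diagQ M (MZ : M - eps - gam g \is a Num.int) :=
  nonderogatory_diagonalizableP (rank_Q_blk_sub (Jm_neq0 M MZ)) (charQ M MZ).
split=> [M /charQ // |]; rewrite -injective_Casimir_eigenvalue //.
split=> [diagonal | inj M MZ]; last exact/(diagQ M MZ).
have MZ : eps + gam g - eps - gam g \is a Num.int.
  by rewrite (_ : _ - _ - _ = 0) ?rpred0 //; ring.
exact/(diagQ _ MZ)/diagonal.
Qed.
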